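(* Let $1\le b<\frac{n}{2}-1$. If $T$ is a tree attaining the maximum value of $M_1$ over $\mathcal{CT}^*_{n,b}$, or a tree attaining the maximum value of $M_2$ over $\mathcal{CT}^*_{n,b}$, then $T$ does not simultaneously contain a vertex of degree $2$ and a vertex of degree $3$.
   Context: A chemical tree is a tree with maximum degree at most $4$. A branching vertex is a vertex of degree greater than $2$. $\mathcal{CT}^*_{n,b}$ is the class of all $n$-vertex chemical trees with exactly $b$ branching vertices. $M_1(G)=\sum_v d_v^2$ and $M_2(G)=\sum_{uv\in E(G)}d_ud_v$, where $d_v$ is the degree of $v$. *)

From mathcomp Require Import all_boot.
Set Implicit Arguments. Unset Strict Implicit. Unset Printing Implicit Defensive.

Section Graphs.
Variable n : nat.
Implicit Types (e : rel 'I_n) (v : 'I_n).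

Definition simple_graph e : Prop :=
  (forall x y, e x y = e y x) /\ (forall x, ~~ e x x).

Definition edges e : {set 'I_n * 'I_n} :=
  [set p : 'I_n * 'I_n | (p.1 < p.2)%N && e p.1 p.2].

Definition deg e v : nat := #|[set u | e v u]|.

Definition is_tree e : Prop :=
  simple_graph e /\ 0 < n /\ (forall x y, connect e x y) /\ #|edges e| = n - 1.

Definition chemical e : Prop := forall v, deg e v <= 4.

Definition num_branching e : nat := #|[set v | 2 < deg e v]|.

Definition in_CT b e : Prop := is_tree e /\ chemical e /\ num_branching e = b.

Definition M1 e : nat := \sum_(v : 'I_n) deg e v ^ 2.
Definition M2 e : nat := \sum_(p in edges e) deg e p.1 * deg e p.2.

Definition is_max_in_CT (I : rel 'I_n -> nat) b e : Prop :=
  in_CT b e /\ forall e', in_CT b e' -> I e' <= I e.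
End Graphs.

From mathcomp Require Import all_boot zify.
Set Implicit Arguments. Unset Strict Implicit. Unset Printing Implicit Defensive.

(* Let u have degree 2, with neighbours x and y, and let v have degree 3.
   Replacing the path x - u - y by the edge xy and hanging u as a leaf on v
   gives again a chemical tree with the same branching vertices: u drops to
   degree 1, v rises to degree 4 and every other degree is unchanged.  Then
   M1 grows by (16 - 9) - (4 - 1) = 4.  For M2 the edges ux and uy, worth
   2 (d_x + d_y), are traded for xy and uv, worth d_x' d_y' + 4, and each of
   the other edges at v gains at least 1; as all degrees are at most 4 this
   is a strict gain. *)

Section IndicatorSums.
Variable n : nat.
Implicit Types (F G : 'I_n -> nat) (c d : 'I_n).

Lemma sum_eq_mul F c : \sum_a (a == c) * F a = F c.
Proof.
by rewrite (bigD1 c) //= eqxx mul1n big1 ?addn0 // => a /negbTE->.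
Qed.

Lemma sum_eq_mulr F c : \sum_a F a * (a == c) = F c.
Proof. by rewrite -[RHS](sum_eq_mul F); apply: eq_bigr => a _; rewrite mulnC. Qed.

Lemma sum_shift F G c d k l :
  (forall w, F w + (w == c) * k = G w + (w == d) * l) ->
  \sum_w F w + k = \sum_w G w + l.
Proof.
move=> FG; rewrite -(sum_eq_mul (fun=> k) c) -(sum_eq_mul (fun=> l) d) -!big_split.
exact: eq_bigr.
Qed.

End IndicatorSums.

Section GraphOperations.
Variable n : nat.
Implicit Types (g : rel 'I_n) (a b p q u w : 'I_n).

Definition add_edge g p q : rel 'I_n :=
  [rel a b | g a b || ((a == p) && (b == q)) || ((a == q) && (b == p))].

Definition del_edge g p q : rel 'I_n :=
  [rel a b | g a b && ~~ (((a == p) && (b == q)) || ((a == q) && (b == p)))].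

Definition isolate g u : rel 'I_n := [rel a b | [&& g a b, a != u & b != u]].

Definition uedge a b : 'I_n * 'I_n := if a < b then (a, b) else (b, a).

Lemma uedge_edges g a b : simple_graph g -> (uedge a b \in edges g) = g a b.
Proof.
case=> gsym girr; rewrite /uedge inE.
have [ab|ba|/val_inj->] := ltngtP a b; rewrite /=.
- by rewrite ab.
- by rewrite ba gsym.
- by rewrite ltnn (negbTE (girr _)).
Qed.

Lemma uedge_inj a b c d : uedge a b = uedge c d -> (a = c /\ b = d) \/ (a = d /\ b = c).
Proof. by rewrite /uedge; do 2 case: ifP => _; case=> -> ->; tauto. Qed.

Lemma simple_add_edge g p q : simple_graph g -> p != q -> simple_graph (add_edge g p q).
Proof.
case=> gsym girr pq; rewrite /add_edge; split=> [a b | a] /=.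
  by rewrite gsym [(a == p) && _]andbC [(a == q) && _]andbC orbAC.
rewrite (negbTE (girr a)) /=; apply/norP; split; apply/andP=> -[/eqP-> /eqP qp];
  by rewrite qp eqxx in pq.
Qed.

Lemma simple_del_edge g p q : simple_graph g -> simple_graph (del_edge g p q).
Proof.
case=> gsym girr; rewrite /del_edge; split=> [a b | a] /=; last by rewrite (negbTE (girr a)).
by rewrite gsym orbC; congr (_ && ~~ (_ || _)); rewrite andbC.
Qed.

Lemma simple_isolate g u : simple_graph g -> simple_graph (isolate g u).
Proof.
case=> gsym girr; rewrite /isolate; split=> [a b | a] /=; last by rewrite (negbTE (girr a)).
by rewrite gsym [(a != u) && _]andbC.
Qed.

Lemma deg_sum g w : deg g w = \sum_b g w b.
Proof.
rewrite /deg -sum1_card big_mkcond /=; apply: eq_bigr => b _.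
by rewrite inE; case: (g w b).
Qed.

Lemma deg_gt0 g a b : g a b -> 0 < deg g a.
Proof. by move=> gab; rewrite card_gt0; apply/set0Pn; exists b; rewrite inE. Qed.

Lemma add_edgeE g p q a b : simple_graph g -> ~~ g p q -> p != q ->
  add_edge g p q a b = g a b + (a == p) * (b == q) + (a == q) * (b == p) :> nat.
Proof.
case=> gsym _ gpq pq; have qp : q != p by rewrite eq_sym.
have gqp : ~~ g q p by rewrite gsym.
rewrite /add_edge /=; have [->|ap] := eqVneq a p; have [->|bq] := eqVneq b q;
  rewrite ?(negbTE gpq) ?(negbTE pq) ?(negbTE qp) /= ?andbF ?orbF ?muln0 ?addn0 //.
by have [->|] := eqVneq a q; have [->|] := eqVneq b p;
  rewrite ?(negbTE gqp) /= ?andbF ?orbF ?muln0 ?addn0.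
Qed.

Lemma isolateE g u a b : simple_graph g ->
  g a b = isolate g u a b + (a == u) * g u b + (b == u) * g a u :> nat.
Proof.
case=> _ girr; rewrite /isolate /=.
have [->|au] := eqVneq a u; have [->|bu] := eqVneq b u;
  by rewrite ?(negbTE (girr u)) /= ?andbF ?andbT ?addn0 ?add0n ?mul1n.
Qed.

Lemma deg_add_edge g p q w : simple_graph g -> ~~ g p q -> p != q ->
  deg (add_edge g p q) w = deg g w + (w == p) + (w == q).
Proof.
move=> gs gpq pq; rewrite !deg_sum -(sum_eq_mulr (fun=> (w == p) : nat) q).
rewrite -(sum_eq_mulr (fun=> (w == q) : nat) p) -!big_split.
by apply: eq_bigr => b _; rewrite add_edgeE.
Qed.

Lemma deg_isolate g u w : simple_graph g -> w != u ->
  deg (isolate g u) w + g w u = deg g w.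
Proof.
move=> gs /negbTE wu; rewrite !deg_sum -(sum_eq_mul (fun=> g w u : nat) u) -big_split.
by apply: eq_bigr => b _; rewrite [RHS](isolateE u) // wu addn0 mulnC.
Qed.

Lemma deg_isolate_id g u : deg (isolate g u) u = 0.
Proof. by rewrite deg_sum big1 // => b _; rewrite /isolate /= eqxx andbF. Qed.

End GraphOperations.

Section PairSums.
Variable n : nat.
Implicit Types (g h : rel 'I_n) (F G : 'I_n -> 'I_n -> nat) (p q u : 'I_n).

Definition pairsum g F := \sum_a \sum_b g a b * F a b.

Lemma eq_pairsum g h F : g =2 h -> pairsum g F = pairsum h F.
Proof. by move=> gh; apply: eq_bigr => a _; apply: eq_bigr => b _; rewrite gh. Qed.

Lemma pairsumD g F G : pairsum g (fun a b => F a b + G a b) = pairsum g F + pairsum g G.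
Proof.
rewrite /pairsum -big_split; apply: eq_bigr => a _.
by rewrite -big_split; apply: eq_bigr => b _; rewrite mulnDr.
Qed.

Lemma leq_pairsum g F G : (forall a b, g a b -> F a b <= G a b) ->
  pairsum g F <= pairsum g G.
Proof.
move=> FG; apply: leq_sum => a _; apply: leq_sum => b _.
by case: (boolP (g a b)) => // /FG; rewrite !mul1n.
Qed.

Lemma pairsum_edges g F : simple_graph g -> (forall a b, F a b = F b a) ->
  pairsum g F = 2 * \sum_(p in edges g) F p.1 p.2.
Proof.
case=> gsym girr Fsym.
have half : \sum_(p : 'I_n * 'I_n | p.1 < p.2) g p.1 p.2 * F p.1 p.2 =
            \sum_(p in edges g) F p.1 p.2.
  rewrite big_mkcond [RHS]big_mkcond; apply: eq_bigr => p _; rewrite inE.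
  by case: (p.1 < p.2); case: (g _ _); rewrite ?mul1n.
rewrite /pairsum pair_big /= (bigID (fun p : 'I_n * 'I_n => p.1 < p.2)) /= half.
rewrite mul2n -addnn; congr (_ + _).
rewrite (reindex_inj (h := fun p : 'I_n * 'I_n => (p.2, p.1))) /=; last first.
  by case=> a b [c d] [-> ->].
rewrite -half big_mkcond [RHS]big_mkcond; apply: eq_bigr => -[a b] _ /=.
have [ab|ba|/val_inj->] := ltngtP a b.
- by rewrite gsym Fsym.
- by [].
- by rewrite (negbTE (girr _)).
Qed.

Lemma handshake g : simple_graph g -> 2 * #|edges g| = \sum_w deg g w.
Proof.
move=> gs; rewrite -sum1_card -(pairsum_edges (F := fun _ _ => 1)) //.
by apply: eq_bigr => a _; rewrite deg_sum; apply: eq_bigr => b _; rewrite muln1.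
Qed.

Lemma M2E g : simple_graph g -> 2 * M2 g = pairsum g (fun a b => deg g a * deg g b).
Proof. by move=> gs; rewrite pairsum_edges // => a b; rewrite mulnC. Qed.

Lemma pairsum_isolate g u F : simple_graph g -> (forall a b, F a b = F b a) ->
  pairsum g F = pairsum (isolate g u) F + 2 * \sum_b g u b * F u b.
Proof.
move=> gs Fsym; have [gsym _] := gs; rewrite /pairsum.
under eq_bigr => a _ do under eq_bigr => b _ do rewrite (isolateE u a b gs) !mulnDl.
under eq_bigr => a _ do rewrite !big_split /=.
rewrite !big_split /= -addnA mul2n -addnn; congr (_ + (_ + _)).
  rewrite (bigD1 u) //= [X in _ + X]big1 ?addn0 => [|a /negbTE au].
    by apply: eq_bigr => b _; rewrite eqxx mul1n.
  by rewrite big1 // => b _; rewrite au.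
apply: eq_bigr => a _; rewrite -(sum_eq_mul (fun=> g u a * F u a) u) gsym Fsym.
by apply: eq_bigr => b _; rewrite mulnA; case: eqP => [->|].
Qed.

Lemma pairsum_add_edge g p q F : simple_graph g -> ~~ g p q -> p != q ->
  pairsum (add_edge g p q) F = pairsum g F + F p q + F q p.
Proof.
move=> gs gpq pq; rewrite /pairsum.
under eq_bigr => a _ do under eq_bigr => b _ do rewrite add_edgeE // !mulnDl -!mulnA.
under eq_bigr => a _ do rewrite !big_split /= -!big_distrr /=.
by rewrite !big_split /= !sum_eq_mul.
Qed.

Lemma pairsum_deg g w : simple_graph g ->
  pairsum g (fun a b => (a == w) + (b == w)) = 2 * deg g w.
Proof.
case=> gsym _; rewrite pairsumD mul2n -addnn deg_sum; congr (_ + _).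
  rewrite /pairsum (bigD1 w) //= [X in _ + X]big1 ?addn0 => [|a /negbTE aw].
    by apply: eq_bigr => b _; rewrite eqxx muln1.
  by rewrite big1 // => b _; rewrite aw muln0.
apply: eq_bigr => a _; rewrite gsym -(sum_eq_mulr (g a)).
by apply: eq_bigr => b _; rewrite mulnC.
Qed.

End PairSums.

Section ConnectedEdges.
Variables (n : nat) (g : rel 'I_n).
Hypothesis g_simple : simple_graph g.

(* Sending each a != r to the edge joining it to a neighbour of smaller rank
   is injective. *)
Lemma edges_ge_of_descent (r : 'I_n) (rank : 'I_n -> nat) :
  (forall a, a != r -> exists2 c, g c a & rank c < rank a) -> n.-1 <= #|edges g|.
Proof.
move=> descent.
have /fin_all_exists [par par_ok] :
    forall a, exists c, a != r -> g c a && (rank c < rank a).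
  move=> a; have [_|/descent [c gca lt]] := eqVneq a r; first by exists r.
  by exists c => _; rewrite gca lt.
have par_inj : {in [set~ r] &, injective (fun a => uedge a (par a))}.
  move=> a b; rewrite !in_setC1 => /par_ok/andP[_ lta] /par_ok/andP[_ ltb].
  case/uedge_inj => [[//] | [ab pab]].
  by rewrite pab in lta; rewrite -ab in ltb; lia.
rewrite -[X in X.-1]card_ord -(cardsC1 r) -(card_in_imset par_inj).
apply: subset_leq_card; apply/subsetP => _ /imsetP[a /[!in_setC1] /par_ok/andP[ga _] ->].
by rewrite uedge_edges // g_simple.1.
Qed.

Lemma connected_descent r : (forall a, connect g r a) ->
  exists rank : 'I_n -> nat, forall a, a != r -> exists2 c, g c a & rank c < rank a.
Proof.
move=> conn.
have walk a : exists k, [exists t : k.-tuple 'I_n, path g r t && (last r t == a)].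
  have /connectP [p gp ->] := conn a.
  by exists (size p); apply/existsP; exists (in_tuple p); rewrite gp eqxx.
(* rank a is the length of a shortest walk from r to a *)
exists (fun a => ex_minn (walk a)) => a ar.
case: ex_minnP => _ /existsP [[p /= /eqP <-] /andP [gp /eqP pa]] _.
case/lastP: p gp pa => [_ /= ra|p c]; first by rewrite ra eqxx in ar.
rewrite rcons_path last_rcons size_rcons => /andP [gp gc] ca.
exists (last r p); first by rewrite -ca.
case: ex_minnP => m _ /(_ (size p)) m_le; apply: leq_ltn_trans (m_le _) _ => //.
by apply/existsP; exists (in_tuple p); rewrite gp eqxx.
Qed.

Lemma connected_edges_ge r : (forall a, connect g r a) -> n.-1 <= #|edges g|.
Proof. by move=> /connected_descent [rank]; apply: edges_ge_of_descent. Qed.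

End ConnectedEdges.

Lemma tree_no_triangle n (g : rel 'I_n) u x y :
  is_tree g -> g u x -> g u y -> x != y -> ~~ g x y.
Proof.
case=> gs [_ [gconn gedges]] gux guy xy; apply/negP => gxy.
have [gsym girr] := gs.
have ux : u != x by apply: contraTneq gux => ->; rewrite (negbTE (girr x)).
have uy : u != y by apply: contraTneq guy => ->; rewrite (negbTE (girr y)).
pose h := del_edge g x y.
have hs : simple_graph h := simple_del_edge x y gs.
have hxu : h x u by rewrite /h /del_edge /= gsym gux eq_sym (negbTE ux) eq_sym (negbTE uy) !andbF.
have huy : h u y by rewrite /h /del_edge /= guy (negbTE ux) (negbTE uy).
have hxy : connect h x y := connect_trans (connect1 hxu) (connect1 huy).
have hyx : connect h y x.
  by rewrite (sym_connect_sym hs.1).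
have h_conn a : connect h x a.
  apply: connect_sub (gconn x a) => c d gcd.
  have [cd|ncd] := boolP ((c == x) && (d == y) || (c == y) && (d == x)).
    by case/orP: cd => /andP[/eqP-> /eqP->].
  by apply: connect1; rewrite /h /del_edge /= gcd ncd.
have lt_edges : #|edges h| < #|edges g|.
  apply: proper_card; apply/properP; split.
    by apply/subsetP => p; rewrite !inE => /andP[-> /andP[-> _]].
  exists (uedge x y); first by rewrite uedge_edges.
  by rewrite uedge_edges // /h /del_edge /= !eqxx andbF.
by have := leq_ltn_trans (connected_edges_ge hs h_conn) lt_edges; rewrite gedges subn1 ltnn.
Qed.

(* dx, dy are the degrees of the neighbours x, y of u, vx and vy tell whether
   they are v, and k counts the neighbours of v other than u. *)
Lemma M2_shift_gain (dx dy k : nat) (vx vy : bool) :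
  0 < dx <= 4 -> 0 < dy <= 4 -> (vx -> dx = 3) -> (vy -> dy = 3) ->
  k + (vx || vy) = 3 -> 2 * (dx + dy) < k + (dx + vx) * (dy + vy) + 4.
Proof.
move=> + + ex ey; case: vx ex => [/(_ isT)-> | _]; case: vy ey => [/(_ isT)-> | _] /=;
  try lia.
by case: dx => [|[|[|[|[|?]]]]] //; case: dy => [|[|[|[|[|?]]]]] //; lia.
Qed.

Lemma leq_mul_addb (m k : nat) (bm bk : bool) :
  0 < m -> 0 < k -> m * k + bm + bk <= (m + bm) * (k + bk).
Proof. by case: bm; case: bk => /= m_gt0 k_gt0; rewrite ?addn0 ?mulnDl ?mulnDr; lia. Qed.

Section LeafShift.
Variables (n : nat) (e : rel 'I_n) (u x y v : 'I_n).
Hypotheses (e_tree : is_tree e) (e_chem : chemical e) (x_neq_y : x != y).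
Hypothesis e_u : forall c, e u c = (c == x) || (c == y).
Hypothesis deg_v : deg e v = 3.

Let e_simple : simple_graph e. Proof. by case: e_tree. Qed.
Let e_sym : symmetric e. Proof. by case: e_simple. Qed.
Let e_ux : e u x. Proof. by rewrite e_u eqxx. Qed.
Let e_uy : e u y. Proof. by rewrite e_u eqxx orbT. Qed.
Let u_neq_x : u != x. Proof. by apply: contraTneq e_ux => ->; exact: e_simple.2. Qed.
Let u_neq_y : u != y. Proof. by apply: contraTneq e_uy => ->; exact: e_simple.2. Qed.
Let deg_u : deg e u = 2.
Proof.
rewrite /deg (_ : [set c | e u c] = [set x; y]) ?cards2 ?x_neq_y //.
by apply/setP => c; rewrite !inE e_u.
Qed.
Let u_neq_v : u != v. Proof. by apply: contra_eqN deg_v => /eqP <-; rewrite deg_u. Qed.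
Let x_neq_u : x != u. Proof. by rewrite eq_sym. Qed.
Let y_neq_u : y != u. Proof. by rewrite eq_sym. Qed.
Let v_neq_u : v != u. Proof. by rewrite eq_sym. Qed.
Let e_u_nat c : e u c = (c == x) + (c == y) :> nat.
Proof. by rewrite e_u; have [->|] := eqVneq c x; rewrite ?(negbTE x_neq_y). Qed.
Let not_e_xy : ~~ e x y. Proof. exact: tree_no_triangle e_tree e_ux e_uy x_neq_y. Qed.

Definition leaf_shift := add_edge (add_edge (isolate e u) x y) u v.
Local Notation e' := leaf_shift.

Let iso_simple : simple_graph (isolate e u). Proof. exact: simple_isolate. Qed.
Let not_iso_xy : ~~ isolate e u x y. Proof. by rewrite /isolate /= (negbTE not_e_xy). Qed.
Let mid_simple : simple_graph (add_edge (isolate e u) x y).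
Proof. exact: simple_add_edge. Qed.
Let not_mid_uv : ~~ add_edge (isolate e u) x y u v.
Proof. by rewrite /add_edge /isolate /= eqxx (negbTE u_neq_x) (negbTE u_neq_y) andbF. Qed.

Lemma leaf_shift_simple : simple_graph e'.
Proof. exact: simple_add_edge. Qed.

Lemma leaf_shift_u c : e' u c = (c == v).
Proof.
rewrite /leaf_shift /add_edge /isolate /= eqxx (negbTE u_neq_x) (negbTE u_neq_y).
by rewrite (negbTE u_neq_v) andbF !orbF.
Qed.

Lemma isolate_leaf_shift : isolate e' u =2 add_edge (isolate e u) x y.
Proof.
move=> a b; rewrite /leaf_shift /add_edge /isolate /=.
have [->|au] := eqVneq a u; have [->|bu] := eqVneq b u;
  by rewrite ?eqxx ?(negbTE au) ?(negbTE bu) ?(negbTE u_neq_x) ?(negbTE u_neq_y) ?andbF ?andbT ?orbF.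
Qed.

Lemma deg_leaf_shift_u : deg e' u = 1.
Proof.
rewrite !deg_add_edge // deg_isolate_id eqxx.
by rewrite (negbTE u_neq_x) (negbTE u_neq_y) (negbTE u_neq_v).
Qed.

Lemma deg_leaf_shift w : w != u -> deg e' w = deg e w + (w == v).
Proof.
move=> wu; rewrite !deg_add_edge // (negbTE wu) addn0.
by rewrite -(deg_isolate e_simple wu) e_sym e_u_nat !addnA.
Qed.

Lemma leaf_shift_connected a b : connect e' a b.
Proof.
have e'_sym := sym_connect_sym leaf_shift_simple.1.
have e'_sub c d : e c d -> c != u -> d != u -> e' c d.
  by move=> ecd cu du; rewrite /leaf_shift /add_edge /isolate /= ecd cu du.
have e'_xy : e' x y by rewrite /leaf_shift /add_edge /= !eqxx /= !orbT.
have from_x c : c != u -> connect e' x c.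
  move=> cu; pose Q := [pred c | (c == u) || connect e' x c].
  have Q_closed : closed e Q.
    apply: (intro_closed (sym_connect_sym e_sym)) => c1 c2 e12.
    rewrite /Q !unfold_in /=; have [// |c2u /=] := eqVneq c2 u.
    have [c1u _|c1u /= xc1] := eqVneq c1 u.
      rewrite c1u e_u in e12.
      by case/orP: e12 => /eqP->; [exact: connect0 | exact: connect1].
    by apply: connect_trans xc1 (connect1 (e'_sub _ _ e12 c1u c2u)).
  have := closed_connect Q_closed (e_tree.2.2.1 x c).
  by rewrite /Q !unfold_in /= connect0 orbT (negbTE cu).
have x_all c : connect e' x c.
  have [->|/from_x//] := eqVneq c u.
  apply: (connect_trans (from_x v _)); first by rewrite eq_sym.
  by apply: connect1; rewrite /leaf_shift /add_edge /= !eqxx !orbT.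
by apply: connect_trans (x_all b); rewrite e'_sym.
Qed.

Lemma leaf_shift_edges : #|edges e'| = #|edges e|.
Proof.
have e'_simple := leaf_shift_simple.
apply/eqP; rewrite -(eqn_pmul2l (isT : 0 < 2)) !handshake //.
rewrite -(eqn_add2r 1); apply/eqP/(sum_shift (c := u) (d := v)) => w.
have [->|wu] := eqVneq w u; first by rewrite deg_leaf_shift_u deg_u (negbTE u_neq_v).
by rewrite deg_leaf_shift // !muln1 addn0.
Qed.

Lemma leaf_shift_tree : is_tree e'.
Proof.
case: e_tree => _ [n_gt0 [_ e_edges]]; split; first exact: leaf_shift_simple.
by rewrite leaf_shift_edges; split; last split; [|exact: leaf_shift_connected|].
Qed.

Lemma leaf_shift_chemical : chemical e'.
Proof.
move=> w; have [->|wu] := eqVneq w u; first by rewrite deg_leaf_shift_u.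
by rewrite deg_leaf_shift //; have [->|_] := eqVneq w v; rewrite ?deg_v ?addn0.
Qed.

Lemma leaf_shift_branching : num_branching e' = num_branching e.
Proof.
apply: eq_card => w; rewrite !inE; have [->|wu] := eqVneq w u.
  by rewrite deg_leaf_shift_u deg_u.
by rewrite deg_leaf_shift //; have [->|_] := eqVneq w v; rewrite ?deg_v ?addn0.
Qed.

Lemma leaf_shift_in_CT b : in_CT b e -> in_CT b e'.
Proof.
case=> _ [_ <-]; split; first exact: leaf_shift_tree.
by split; [exact: leaf_shift_chemical | exact: leaf_shift_branching].
Qed.

Lemma M1_leaf_shift : M1 e < M1 e'.
Proof.
have : M1 e' + 3 = M1 e + 7.
  apply: (sum_shift (c := u) (d := v)) => w; have [->|wu] := eqVneq w u.
    by rewrite deg_leaf_shift_u deg_u (negbTE u_neq_v).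
  by rewrite deg_leaf_shift //; have [->|_] := eqVneq w v; rewrite ?deg_v !addn0.
by move=> M1_e'; rewrite -(ltn_add2r 3) M1_e' ltn_add2l.
Qed.

Let deg_e'_xy : deg e' x * deg e' y = (deg e x + (x == v)) * (deg e y + (y == v)).
Proof. by rewrite !deg_leaf_shift. Qed.

Lemma M2_split_u : 2 * M2 e =
  pairsum (isolate e u) (fun a b => deg e a * deg e b) + 4 * (deg e x + deg e y).
Proof.
rewrite M2E // (pairsum_isolate u) // => [|a b]; last exact: mulnC.
congr (_ + _); under eq_bigr => b _ do rewrite e_u_nat mulnDl.
by rewrite big_split /= !sum_eq_mul deg_u -mulnDr mulnA.
Qed.

Lemma M2_leaf_shift_split_u : 2 * M2 e' =
  pairsum (isolate e u) (fun a b => deg e' a * deg e' b) + 2 * (deg e' x * deg e' y) + 8.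
Proof.
have e'_simple := leaf_shift_simple.
rewrite M2E // (pairsum_isolate u) // => [|a b]; last exact: mulnC.
rewrite (eq_pairsum _ isolate_leaf_shift) pairsum_add_edge //.
under eq_bigr => b _ do rewrite leaf_shift_u.
rewrite sum_eq_mul deg_leaf_shift_u (deg_leaf_shift v_neq_u) deg_v eqxx.
by rewrite [deg e' y * _]mulnC [2 * (deg e' x * _)]mul2n -addnn addnA.
Qed.

Lemma pairsum_isolate_leaf_shift :
  pairsum (isolate e u) (fun a b => deg e a * deg e b) + 2 * deg (isolate e u) v
  <= pairsum (isolate e u) (fun a b => deg e' a * deg e' b).
Proof.
rewrite -pairsum_deg // -pairsumD; apply: leq_pairsum => a b /and3P[eab au bu].
rewrite !deg_leaf_shift // addnA; apply: leq_mul_addb; first exact: deg_gt0 eab.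
by rewrite e_sym in eab; exact: deg_gt0 eab.
Qed.

Lemma M2_leaf_shift : M2 e < M2 e'.
Proof.
have nbrs_v : deg (isolate e u) v + ((x == v) || (y == v)) = 3.
  by rewrite -deg_v -(deg_isolate e_simple v_neq_u) e_sym e_u ![v == _]eq_sym.
have deg_bounds w : e u w -> 0 < deg e w <= 4.
  by rewrite e_sym => /deg_gt0->; exact: e_chem.
have deg_3 w : w == v -> deg e w = 3 by move/eqP->.
have gain := M2_shift_gain (deg_bounds x e_ux) (deg_bounds y e_uy) (@deg_3 x) (@deg_3 y) nbrs_v.
rewrite -(ltn_pmul2l (isT : 0 < 2)) M2_split_u M2_leaf_shift_split_u deg_e'_xy.
have := pairsum_isolate_leaf_shift; clear -gain; lia.
Qed.

End LeafShift.

Theorem lemma7 (n b : nat) (e : rel 'I_n) :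
  1 <= b -> 2 * b + 2 < n ->
  (is_max_in_CT (@M1 n) b e \/ is_max_in_CT (@M2 n) b e) ->
  ~ ((exists u : 'I_n, deg e u = 2) /\ (exists v : 'I_n, deg e v = 3)).
Proof.
move=> _ _ e_max [[u deg_u] [v deg_v]].
have e_CT : in_CT b e by case: e_max => -[].
have [e_tree [e_chem _]] := e_CT.
have /cards2P [x [y [x_neq_y N_u]]] : #|[set c | e u c]| == 2 by rewrite -/(deg e u) deg_u.
have e_u c : e u c = (c == x) || (c == y) by move/setP/(_ c): N_u; rewrite !inE.
have shift_CT := leaf_shift_in_CT e_tree e_chem x_neq_y e_u deg_v e_CT.
case: e_max => -[_ e_max]; have := e_max _ shift_CT; rewrite leqNgt.
- by rewrite M1_leaf_shift.
- by rewrite M2_leaf_shift.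
Qed.
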